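(* Let $\mathcal{H}$ be a complex separable Hilbert space, $A\in\mathcal{B}(\mathcal{H})$ and $\mathcal{G}\subset\mathcal{H}$ a countable Bessel system. Suppose that there is $C>0$ with $\sum_{g\in\mathcal{G}}\int_0^\infty|\langle f,e^{tA}g\rangle|^2dt\le C\|f\|^2$ for all $f\in\mathcal{H}$, and that for some $0<L<\infty$ the system $\{e^{tA}g\}_{g\in\mathcal{G},\,t\in[0,L]}$ is a semi-continuous frame for $\mathcal{H}$. Then $\{e^{tA}\}_{t\ge0}$ is exponentially stable.
   Context: For $A\in\mathcal{B}(\mathcal{H})$, $e^{tA}:=\sum_{n\ge0}\frac{t^n}{n!}A^n$. The semigroup $\{e^{tA}\}_{t\ge0}$ is exponentially stable if there are constants $M\ge1$ and $\omega<0$ with $\|e^{tA}\|\le Me^{\omega t}$ for all $t\ge0$. A countable family $\{f_k\}\subset\mathcal{H}$ is a Bessel system if there is $C>0$ with $\sum_k|\langle f,f_k\rangle|^2\le C\|f\|^2$ for all $f\in\mathcal{H}$. For a countable $\mathcal{G}\subset\mathcal{H}$ and an interval $\mathcal{T}\subset[0,\infty)$, $\{e^{tA}g\}_{g\in\mathcal{G},t\in\mathcal{T}}$ is a semi-continuous frame for $\mathcal{H}$ if there are constants $c,C>0$ such that $c\|f\|^2\le\sum_{g\in\mathcal{G}}\int_{\mathcal{T}}|\langle f,e^{tA}g\rangle|^2\,dt\le C\|f\|^2$ for all $f\in\mathcal{H}$. *)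

From HB Require Import structures.
From mathcomp Require Import all_boot all_order all_algebra.
From mathcomp Require Import all_classical all_reals all_analysis.
From mathcomp Require Import complex.
Set Implicit Arguments. Unset Strict Implicit. Unset Printing Implicit Defensive.
Import Order.TTheory GRing.Theory Num.Theory.
Local Open Scope ring_scope.
Local Open Scope classical_set_scope.
Local Open Scope complex_scope.

Section HilbertDefs.
Variable R : realType.
Variable V : lmodType R[i].
(* ip : the inner product, linear in the first argument *)
Variable ip : V -> V -> R[i].

Definition cabs2 (z : R[i]) : R := complex.Re z ^+ 2 + complex.Im z ^+ 2.

Definition hnorm (x : V) : R := Num.sqrt (complex.Re (ip x x)).

Definition is_inner_product : Prop :=
  [/\ (forall (a : R[i]) (x y z : V), ip (a *: x + y) z = a * ip x z + ip y z),
      (forall x y : V, ip y x = (ip x y)^*),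
      (forall x : V, 0 <= complex.Re (ip x x)) &
      (forall x : V, ip x x = 0 -> x = 0)].

Definition hcvg_to (u : nat -> V) (l : V) : Prop :=
  forall e : R, 0 < e -> exists N : nat, forall n : nat, (N <= n)%N -> hnorm (u n - l) < e.

Definition hcauchy (u : nat -> V) : Prop :=
  forall e : R, 0 < e -> exists N : nat, forall m n : nat,
    (N <= m)%N -> (N <= n)%N -> hnorm (u m - u n) < e.

Definition hcomplete : Prop :=
  forall u : nat -> V, hcauchy u -> exists l : V, hcvg_to u l.

Definition hseparable : Prop :=
  exists D : nat -> V, forall (x : V) (e : R), 0 < e -> exists k : nat, hnorm (x - D k) < e.

Definition complex_separable_hilbert : Prop :=
  [/\ is_inner_product, hcomplete & hseparable].

Definition bounded_operator (A : V -> V) : Prop :=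
  (forall (a : R[i]) (x y : V), A (a *: x + y) = a *: A x + A y) /\
  exists K : R, forall x : V, hnorm (A x) <= K * hnorm x.

Definition is_operator_exp (A : V -> V) (E : R -> V -> V) : Prop :=
  forall (t : R) (f : V),
    hcvg_to (fun N => \sum_(k < N) ((t ^+ k / (k`!)%:R)%:C *: iter k A f)) (E t f).

Definition bessel_system (G : set V) : Prop :=
  exists C : R, 0 < C /\ forall f : V,
    (\esum_(g in G) (cabs2 (ip f g))%:E <= (C * hnorm f ^+ 2)%:E)%E.

Definition semi_continuous_frame (E : R -> V -> V) (G : set V) (T : set R) : Prop :=
  exists c C : R, [/\ 0 < c, 0 < C & forall f : V,
    ((c * hnorm f ^+ 2)%:E <=
       \esum_(g in G) \int[lebesgue_measure]_(t in T) (cabs2 (ip f (E t g)))%:E)%E /\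
    (\esum_(g in G) \int[lebesgue_measure]_(t in T) (cabs2 (ip f (E t g)))%:E <=
       (C * hnorm f ^+ 2)%:E)%E].

(* exponential stability: ||E t|| <= M e^{w t}, operator norm bound written pointwise *)
Definition exponentially_stable (E : R -> V -> V) : Prop :=
  exists M w : R, [/\ 1 <= M, w < 0 &
    forall t : R, 0 <= t -> forall f : V, hnorm (E t f) <= M * expR (w * t) * hnorm f].

End HilbertDefs.

From HB Require Import structures.
From mathcomp Require Import all_boot all_order all_algebra.
From mathcomp Require Import all_classical all_reals all_analysis.
From mathcomp Require Import complex.
From mathcomp Require Import ring lra.
From mathcomp Require Import measurable_realfun.
Set Implicit Arguments. Unset Strict Implicit. Unset Printing Implicit Defensive.
Import Order.TTheory GRing.Theory Num.Theory.
Import numFieldNormedType.Exports.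
Local Open Scope ring_scope.
Local Open Scope classical_set_scope.
Local Open Scope complex_scope.

(* Let T(s)^* be the adjoint of T(s) (Riesz).  Since
   <T(kL)^* f, T(t) g> = <f, T(t + kL) g>, the lower frame bound on the block
   [kL, (k+1)L] and the integral bound on [0, oo) give
     c sum_(k < n) ||T(kL)^* f||^2 <= C ||f||^2        for all n.
   With T((n-k)L)^* T(kL)^* = T(nL)^* this yields n ||T(nL)^* f||^2 <= (C/c)^2 ||f||^2,
   so ||T(NL)|| = ||T(NL)^*|| <= 1/2 for N large, and the semigroup law turns
   this contraction into exponential decay.
   The file develops, in order: the inner-product and norm calculus, norm
   convergence, the exponential series and its bounds, the semigroup law (a
   Cauchy-product estimate), continuity of t |-> |<f, T(t) g>|^2, the Riesz
   representation, integral translation and Datko's summation, the abstract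
   halving step, and finally stability from a contraction and the theorem. *)

Section LinearAxiom.
Variables (R : realType) (U W : lmodType R[i]) (f : U -> W).
Hypothesis flin : linear f.

Lemma lin0 : f 0 = 0.
Proof.
have := flin 1 0 0; rewrite scaler0 addr0 scale1r.
by move=> /(congr1 (fun w => w - f 0)); rewrite subrr addrK.
Qed.

Lemma linD x y : f (x + y) = f x + f y.
Proof. by rewrite -[x]scale1r flin !scale1r. Qed.

Lemma linZ a x : f (a *: x) = a *: f x.
Proof. by rewrite -[a *: x]addr0 flin lin0 addr0. Qed.

Lemma linB x y : f (x - y) = f x - f y.
Proof. by rewrite linD -scaleN1r linZ scaleN1r. Qed.

Lemma lin_sum (I : Type) (s : seq I) (F : I -> U) :
  f (\sum_(i <- s) F i) = \sum_(i <- s) f (F i).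
Proof.
elim: s => [|a s IH]; first by rewrite !big_nil lin0.
by rewrite !big_cons linD IH.
Qed.

End LinearAxiom.

Lemma iter_linear (R : realType) (U : lmodType R[i]) (f : U -> U) (k : nat) :
  linear f -> linear (iter k f).
Proof.
move=> flin a x y; elim: k => [|k IH] //=.
by rewrite IH flin.
Qed.

Definition cmod (R : realType) (z : R[i]) : R := Num.sqrt (cabs2 z).

Section ComplexModulus.
Variable R : realType.
Implicit Types z : R[i].

Lemma cabs2_ge0 z : 0 <= cabs2 z.
Proof. by rewrite /cabs2 addr_ge0 ?sqr_ge0. Qed.

Lemma cabs2_eq0 z : cabs2 z = 0 -> z = 0.
Proof.
case: z => a b; rewrite /cabs2 /= => /eqP; rewrite paddr_eq0 ?sqr_ge0 //.
by rewrite !sqrf_eq0 => /andP[/eqP -> /eqP ->].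
Qed.

Lemma cmod_ge0 z : 0 <= cmod z. Proof. exact: sqrtr_ge0. Qed.

Lemma cmod_eq0 z : cmod z = 0 -> z = 0.
Proof.
move=> /eqP; rewrite sqrtr_eq0 => h; apply: cabs2_eq0.
by apply/eqP; rewrite eq_le h cabs2_ge0.
Qed.

Lemma cmod_real (r : R) : cmod r%:C = `|r|.
Proof. by rewrite /cmod /cabs2 /= expr0n /= addr0 sqrtr_sqr. Qed.

Lemma cmod_ge_Re z : `|complex.Re z| <= cmod z.
Proof.
rewrite /cmod -sqrtr_sqr ler_wsqrtr // /cabs2 lerDl; exact: sqr_ge0.
Qed.

Lemma cmod_ge_Im z : `|complex.Im z| <= cmod z.
Proof.
rewrite /cmod -sqrtr_sqr ler_wsqrtr // /cabs2 lerDr; exact: sqr_ge0.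
Qed.

End ComplexModulus.

Section InnerProduct.
Variables (R : realType) (V : lmodType R[i]) (ip : V -> V -> R[i]).
Hypothesis Hip : is_inner_product ip.
Local Notation hn := (hnorm ip).

Definition hsq (x : V) : R := complex.Re (ip x x).

Lemma ip_linl z : linear (fun x => ip x z : R[i]^o).
Proof. by case: Hip => h _ _ _ a x y; apply: h. Qed.

Lemma ipC x y : ip y x = (ip x y)^*.
Proof. by case: Hip => _ h _ _; apply: h. Qed.

Lemma hsq_ge0 x : 0 <= hsq x.
Proof. by case: Hip => _ _ h _; apply: h. Qed.

Lemma ip_self_eq0 x : ip x x = 0 -> x = 0.
Proof. by case: Hip => _ _ _ h; apply: h. Qed.

Lemma ip0l z : ip 0 z = 0. Proof. exact: lin0 (ip_linl z). Qed.
Lemma ipBl x y z : ip (x - y) z = ip x z - ip y z. Proof. exact: (linB (ip_linl z) x y). Qed.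
Lemma ipZl a x z : ip (a *: x) z = a * ip x z. Proof. exact: (linZ (ip_linl z) a x). Qed.
Lemma ipDl x y z : ip (x + y) z = ip x z + ip y z. Proof. exact: (linD (ip_linl z) x y). Qed.

Lemma ip0r z : ip z 0 = 0. Proof. by rewrite ipC ip0l conjc0. Qed.
Lemma ipDr z x y : ip z (x + y) = ip z x + ip z y.
Proof. by rewrite ipC ipDl rmorphD (ipC x z) (ipC y z). Qed.
Lemma ipZr z a x : ip z (a *: x) = conjc a * ip z x.
Proof. by rewrite ipC ipZl rmorphM (ipC x z). Qed.
Lemma ipBr z x y : ip z (x - y) = ip z x - ip z y.
Proof. by rewrite ipC ipBl rmorphB (ipC x z) (ipC y z). Qed.
Lemma ipNr z x : ip z (- x) = - ip z x.
Proof. by rewrite -sub0r ipBr ip0r sub0r. Qed.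

Lemma ip_inj u v : (forall h, ip u h = ip v h) -> u = v.
Proof. by move=> e; apply/eqP; rewrite -subr_eq0; apply/eqP/ip_self_eq0; rewrite ipBl e subrr. Qed.

Lemma ip_self x : ip x x = (hsq x)%:C.
Proof.
have := ipC x x; rewrite /hsq; case: (ip x x) => a b [] hb.
by congr Complex; lra.
Qed.

Lemma hsq_eq0 x : hsq x = 0 -> x = 0.
Proof. by move=> h; apply: ip_self_eq0; rewrite ip_self h. Qed.

Lemma hsqD x y : hsq (x + y) = hsq x + hsq y + 2 * complex.Re (ip x y).
Proof.
rewrite /hsq ipDl !ipDr [ip y x]ipC.
by case: (ip x y) => a b; case: (ip x x) => ? ?; case: (ip y y) => ? ? /=; ring.
Qed.

Lemma hsqB_scale x y b :
  hsq (x - b *: y) = hsq x - 2 * complex.Re (conjc b * ip x y) + cabs2 b * hsq y.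
Proof.
rewrite /hsq ipBl !ipBr !ipZl !ipZr [ip y x]ipC !ip_self /cabs2.
by case: b => p q; case: (ip x y) => a c /=; ring.
Qed.

Lemma hnorm_ge0 x : 0 <= hn x. Proof. exact: sqrtr_ge0. Qed.

Lemma hnorm_sqr x : hn x ^+ 2 = hsq x.
Proof. by rewrite /hnorm sqr_sqrtr // hsq_ge0. Qed.

Lemma hnorm_eq0 x : hn x = 0 -> x = 0.
Proof. by move=> h; apply: hsq_eq0; rewrite -hnorm_sqr h expr0n. Qed.

Lemma hnorm0 : hn 0 = 0.
Proof. by rewrite /hnorm ip0l sqrtr0. Qed.

Lemma hnormZ a x : hn (a *: x) = cmod a * hn x.
Proof.
rewrite /hnorm /cmod -sqrtrM ?cabs2_ge0 //; congr Num.sqrt.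
rewrite ipZl ipZr ip_self /cabs2; case: a => p q /=; ring.
Qed.

Lemma hnormZ_real (r : R) x : hn (r%:C *: x) = `|r| * hn x.
Proof. by rewrite hnormZ cmod_real. Qed.

Lemma hnormN x : hn (- x) = hn x.
Proof. by rewrite -scaleN1r hnormZ -(rmorphN1 (real_complex R)) cmod_real normrN1 mul1r. Qed.

Lemma hnormB x y : hn (x - y) = hn (y - x).
Proof. by rewrite -hnormN opprB. Qed.

Lemma cauchy_schwarz x y : cabs2 (ip x y) <= hsq x * hsq y.
Proof.
have [y0|ny] := eqVneq (hsq y) 0.
  by rewrite (hsq_eq0 y0) ip0r /hsq ip0l mulr0 /cabs2 /= expr0n /= addr0.
have py : 0 < hsq y by rewrite lt_def ny hsq_ge0.
set z := ip x y.
have := hsq_ge0 (x - ((hsq y)^-1%:C * z) *: y).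
rewrite hsqB_scale -/z.
have -> : cabs2 ((hsq y)^-1%:C * z) = (hsq y)^-2 * cabs2 z.
  rewrite /cabs2; case: z => p q /=; rewrite !mul0r !subr0 !addr0.
  by rewrite !exprMn -mulrDr exprVn.
have -> : complex.Re (conjc ((hsq y)^-1%:C * z) * z) = (hsq y)^-1 * cabs2 z.
  by rewrite /cabs2; case: z => p q /=; rewrite !mul0r !subr0 !addr0; ring.
move=> h.
suff : 0 <= hsq x * hsq y - cabs2 z by lra.
have -> : hsq x * hsq y - cabs2 z =
   hsq y * (hsq x - 2 * ((hsq y)^-1 * cabs2 z) + (hsq y)^-2 * cabs2 z * hsq y).
  by field; rewrite ny.
by rewrite mulr_ge0 // ltW.
Qed.

Lemma cmod_ip_le x y : cmod (ip x y) <= hn x * hn y.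
Proof. by rewrite /cmod -sqrtrM ?hsq_ge0 // ler_wsqrtr // cauchy_schwarz. Qed.

Lemma Re_ip_le x y : complex.Re (ip x y) <= hn x * hn y.
Proof. exact: le_trans (ler_norm _) (le_trans (cmod_ge_Re _) (cmod_ip_le x y)). Qed.

Lemma hnormD x y : hn (x + y) <= hn x + hn y.
Proof.
rewrite {1}/hnorm -/(hsq _) -[hn x + hn y]ger0_norm ?addr_ge0 ?hnorm_ge0 //.
rewrite -sqrtr_sqr.
rewrite ler_wsqrtr // hsqD sqrrD !hnorm_sqr.
by have := Re_ip_le x y; lra.
Qed.

Lemma hnorm_sum (I : Type) (s : seq I) (F : I -> V) :
  hn (\sum_(i <- s) F i) <= \sum_(i <- s) hn (F i).
Proof.
elim: s => [|a s IH]; first by rewrite !big_nil hnorm0.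
by rewrite !big_cons (le_trans (hnormD _ _)) // lerD.
Qed.

Lemma hnorm_tri x y z : hn (x - z) <= hn (x - y) + hn (y - z).
Proof. by rewrite -[x - z](subrKA y) hnormD. Qed.

End InnerProduct.

Lemma cvg_lbound (R : realType) (u : nat -> R) (x l : R) :
  u @ \oo --> l -> (\forall n \near \oo, x <= u n) -> x <= l.
Proof. by move=> hu hx; rewrite -(cvg_lim _ hu) //; apply: limr_ge => //; apply/cvg_ex; exists l. Qed.

Section NormConvergence.
Variables (R : realType) (V : lmodType R[i]) (ip : V -> V -> R[i]).
Hypothesis Hip : is_inner_product ip.
Local Notation hn := (hnorm ip).

Lemma hcvgP (u : nat -> V) l :
  hcvg_to ip u l <-> (fun n => hn (u n - l)) @ \oo --> 0.
Proof.
split=> [h|/cvgrPdist_lt h e /h [N _ HN]].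
  apply/cvgrPdist_lt => e /h [N HN]; exists N => // n /HN.
  by rewrite sub0r normrN ger0_norm // hnorm_ge0.
by exists N => n /HN; rewrite sub0r normrN ger0_norm // hnorm_ge0.
Qed.

Lemma hcvg_dominated (u : nat -> V) l (a : nat -> R) :
  (forall n, hn (u n - l) <= a n) -> a @ \oo --> 0 -> hcvg_to ip u l.
Proof.
move=> hb ha; apply/hcvgP; apply: (squeeze_cvgr _ (cvg_cst 0) ha).
by apply: nearW => n; rewrite hnorm_ge0 hb.
Qed.

Lemma hcvg_unique (u : nat -> V) l l' : hcvg_to ip u l -> hcvg_to ip u l' -> l = l'.
Proof.
move=> /hcvgP hl /hcvgP hl'; apply/eqP; rewrite -subr_eq0; apply/eqP/(hnorm_eq0 Hip).
apply/eqP; rewrite eq_le hnorm_ge0 andbT.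
rewrite -[0](addr0 0); apply: (cvg_lbound (cvgD hl hl')); apply: nearW => n.
apply: le_trans (hnorm_tri Hip l (u n) l') _.
by rewrite (hnormB Hip l); exact: lexx.
Qed.

Lemma hcvg_norm_le (u : nat -> V) l (B : R) :
  hcvg_to ip u l -> (\forall n \near \oo, hn (u n) <= B) -> hn l <= B.
Proof.
move=> /hcvgP hl hB; rewrite -[B]addr0; apply: (cvg_lbound (cvgD (cvg_cst B) hl)).
apply: filterS hB => n hn_le; apply: le_trans (lerD hn_le (lexx _)).
by rewrite (hnormB Hip) -{1}[l](subrK (u n)) addrC hnormD.
Qed.

Lemma hcvg_lin (u v : nat -> V) l m (a : R[i]) :
  hcvg_to ip u l -> hcvg_to ip v m ->
  hcvg_to ip (fun n => a *: u n + v n) (a *: l + m).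
Proof.
move=> /hcvgP hu /hcvgP hv.
apply: (hcvg_dominated (a := fun n => cmod a * hn (u n - l) + hn (v n - m))).
  move=> n; have -> : a *: u n + v n - (a *: l + m) = a *: (u n - l) + (v n - m).
    by rewrite scalerBr addrACA opprD.
  by apply: le_trans (hnormD Hip _ _) _; rewrite (hnormZ Hip).
rewrite -[0](addr0 0) -[X in X + _](mulr0 (cmod a)).
exact: cvgD (cvgMl_tmp (a := cmod a) hu) hv.
Qed.

End NormConvergence.

Definition ecoef (R : realType) (t : R) (k : nat) : R := t ^+ k / (k`!)%:R.

Section TaylorCoefficients.
Variable R : realType.
Implicit Types t : R.

Lemma ecoefE t k : ecoef t k = exp_coeff t k.
Proof. by rewrite /ecoef exp_coeffE /= mulrC. Qed.

Lemma ecoef0 t : ecoef t 0 = 1.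
Proof. by rewrite /ecoef expr0 fact0 divr1. Qed.

Lemma ecoef_norm t k : `|ecoef t k| = ecoef `|t| k.
Proof. by rewrite /ecoef normrM normrX normfV normr_nat. Qed.

Lemma ecoef_ge0 t k : 0 <= t -> 0 <= ecoef t k.
Proof. by move=> t0; rewrite /ecoef mulr_ge0 ?exprn_ge0 ?invr_ge0 ?ler0n. Qed.

Lemma ecoefM t c k : ecoef t k * c ^+ k = ecoef (t * c) k.
Proof. by rewrite /ecoef exprMn mulrAC. Qed.

Lemma exp_partial_le (x : R) n : 0 <= x -> series (exp_coeff x) n <= expR x.
Proof.
move=> x0; apply: nondecreasing_cvgn_le; last exact: is_cvg_series_exp_coeff.
by apply: nondecreasing_series => k _ _; apply: exp_coeff_ge0.
Qed.

Lemma series_ord (u : nat -> R) N : series u N = \sum_(k < N) u k.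
Proof. by rewrite /series /= big_mkord. Qed.

End TaylorCoefficients.

Section OperatorExponential.
Variables (R : realType) (V : lmodType R[i]) (ip : V -> V -> R[i]).
Hypothesis Hip : is_inner_product ip.
Local Notation hn := (hnorm ip).
Variables (A : V -> V) (K : R).
Hypothesis Alin : linear A.
Hypothesis K0 : 0 <= K.
Hypothesis HK : forall x, hn (A x) <= K * hn x.
Variable E : R -> V -> V.
Hypothesis HE : is_operator_exp ip A E.

Definition exp_partial (t : R) (N : nat) (f : V) : V :=
  \sum_(k < N) ((ecoef t k)%:C *: iter k A f).

Lemma exp_partial_cvg t f : hcvg_to ip (fun N => exp_partial t N f) (E t f).
Proof. exact: HE. Qed.

Lemma iter_bound k x : hn (iter k A x) <= K ^+ k * hn x.
Proof.
elim: k => [|k IH] /=; first by rewrite expr0 mul1r.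
by rewrite (le_trans (HK _)) // exprS -mulrA ler_wpM2l.
Qed.

Lemma exp_term_bound t k x :
  hn ((ecoef t k)%:C *: iter k A x) <= exp_coeff (`|t| * K) k * hn x.
Proof.
rewrite (hnormZ_real Hip) ecoef_norm -ecoefE -ecoefM -mulrA.
by rewrite ler_wpM2l ?ecoef_ge0 ?iter_bound.
Qed.

Lemma exp_partial_bound t N f :
  hn (exp_partial t N f) <= series (exp_coeff (`|t| * K)) N * hn f.
Proof.
apply: le_trans (hnorm_sum Hip _ _) _.
by rewrite series_ord mulr_suml; apply: ler_sum => k _; exact: exp_term_bound.
Qed.

Lemma exp_partial_le_exp t N f : hn (exp_partial t N f) <= expR (`|t| * K) * hn f.
Proof.
rewrite (le_trans (exp_partial_bound t N f)) // ler_wpM2r ?hnorm_ge0 //.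
by rewrite exp_partial_le // mulr_ge0.
Qed.

Lemma exp_partial_linear t N : linear (exp_partial t N).
Proof.
move=> a x y; rewrite /exp_partial scaler_sumr -big_split.
apply: eq_bigr => k _; rewrite (iter_linear k Alin) scalerDr !scalerA.
by rewrite mulrC.
Qed.

Lemma exp_linear t : linear (E t).
Proof.
move=> a x y; apply: (hcvg_unique Hip (exp_partial_cvg t (a *: x + y))).
under eq_fun => N do rewrite exp_partial_linear.
by apply: (hcvg_lin Hip); exact: exp_partial_cvg.
Qed.

Lemma exp_bound t f : hn (E t f) <= expR (`|t| * K) * hn f.
Proof.
apply: (hcvg_norm_le Hip (exp_partial_cvg t f)); apply: nearW => N.
exact: exp_partial_le_exp.
Qed.

Lemma exp_sub_id t f : hn (E t f - f) <= (expR (`|t| * K) - 1) * hn f.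
Proof.
have hc : hcvg_to ip (fun N => 1 *: exp_partial t N f + - f) (1 *: E t f + - f).
  apply: (hcvg_lin Hip); first exact: exp_partial_cvg.
  by move=> e e0; exists 0%N => n _; rewrite subrr hnorm0.
rewrite scale1r in hc; apply: (hcvg_norm_le Hip hc); exists 1%N => // -[//|M] _.
rewrite scale1r /exp_partial big_ord_recl /= ecoef0 scale1r addrAC subrr add0r.
apply: le_trans (hnorm_sum Hip _ _) _.
apply: (@le_trans _ _ ((series (exp_coeff (`|t| * K)) M.+1 - 1) * hn f)).
  rewrite series_ord big_ord_recl /= -ecoefE ecoef0 addrAC subrr add0r mulr_suml.
  by apply: ler_sum => k _; exact: (exp_term_bound t k.+1 f).
by rewrite ler_wpM2r ?hnorm_ge0 // lerB // exp_partial_le // mulr_ge0.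
Qed.

End OperatorExponential.

(* Reindexing the Cauchy product: the triangle {j + k < N} as a union of rows. *)
Lemma triangle_sum (W : zmodType) (H : nat -> nat -> W) (N : nat) :
  \sum_(n < N) \sum_(j < n.+1) H j (n - j)%N = \sum_(j < N) \sum_(k < N - j) H j k.
Proof.
elim: N => [|N IH]; first by rewrite !big_ord0.
rewrite big_ord_recr /= IH.
have -> : \sum_(j < N.+1) \sum_(k < N.+1 - j) H j k =
          \sum_(j < N.+1) (\sum_(k < N - j) H j k + H j (N - j)%N).
  by apply: eq_bigr => j _; rewrite subSn ?big_ord_recr // -ltnS.
rewrite big_split /=; congr (_ + _).
by rewrite big_ord_recr /= subnn big_ord0 addr0.
Qed.

Lemma square_minus_triangle (W : zmodType) (H : nat -> nat -> W) (N : nat) :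
  \sum_(j < N) \sum_(k < N) H j k - \sum_(n < N) \sum_(j < n.+1) H j (n - j)%N =
  \sum_(j < N) \sum_(N - j <= k < N) H j k.
Proof.
rewrite triangle_sum -sumrB; apply: eq_bigr => j _.
rewrite -!(big_mkord xpredT) (@big_cat_nat _ _ _ (N - j)%N 0 N) ?leq_subr //=.
by rewrite addrC addrK.
Qed.

Lemma ecoef_binom (R : realType) (a b : R) n :
  ecoef (a + b) n = \sum_(j < n.+1) ecoef a j * ecoef b (n - j).
Proof.
rewrite /ecoef addrC exprDn mulr_suml; apply: eq_bigr => j _.
have jn : (j <= n)%N by rewrite -ltnS.
have -> : (n`!)%:R = ('C(n, j))%:R * (j`!)%:R * ((n - j)`!)%:R :> R.
  by rewrite -!natrM -(bin_fact jn) mulnA.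
have c0 : ('C(n, j))%:R != 0 :> R by rewrite pnatr_eq0 -lt0n bin_gt0.
have f0 k : (k`!)%:R != 0 :> R by rewrite pnatr_eq0 -lt0n fact_gt0.
by rewrite -mulr_natr; field; rewrite c0 !f0.
Qed.

Lemma exp_cauchy_defect_cvg (R : realType) (p q : R) :
  (fun N => series (exp_coeff p) N * series (exp_coeff q) N - series (exp_coeff (p + q)) N)
    @ \oo --> 0.
Proof.
rewrite -(subrr (expR (p + q))) {1}expRD.
by apply: cvgB; first apply: cvgM; exact: is_cvg_series_exp_coeff.
Qed.

(* Semigroup law e^{(a+b)A} = e^{aA} e^{bA}, by a Cauchy-product estimate. *)
Section Semigroup.
Variables (R : realType) (V : lmodType R[i]) (ip : V -> V -> R[i]).
Hypothesis Hip : is_inner_product ip.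
Local Notation hn := (hnorm ip).
Variables (A : V -> V) (K : R).
Hypothesis Alin : linear A.
Hypothesis K0 : 0 <= K.
Hypothesis HK : forall x, hn (A x) <= K * hn x.
Variable E : R -> V -> V.
Hypothesis HE : is_operator_exp ip A E.

Local Notation S := (exp_partial A).

Definition double_term (a b : R) (f : V) (j k : nat) : V :=
  (ecoef a j * ecoef b k)%:C *: iter (j + k) A f.

Lemma exp_partial_comp a b f N :
  S a N (S b N f) = \sum_(j < N) \sum_(k < N) double_term a b f j k.
Proof.
apply: eq_bigr => j _; rewrite (lin_sum (iter_linear j Alin)) scaler_sumr.
by apply: eq_bigr => k _; rewrite (linZ (iter_linear j Alin)) scalerA -rmorphM /double_term iterD.
Qed.

Lemma exp_partial_add a b f N :
  S (a + b) N f = \sum_(n < N) \sum_(j < n.+1) double_term a b f j (n - j)%N.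
Proof.
apply: eq_bigr => n _; rewrite ecoef_binom rmorph_sum scaler_suml.
by apply: eq_bigr => j _; rewrite /double_term subnKC // -ltnS.
Qed.

Lemma double_term_bound a b f j k :
  hn (double_term a b f j k) <= ecoef (`|a| * K) j * ecoef (`|b| * K) k * hn f.
Proof.
rewrite /double_term (hnormZ_real Hip) normrM !ecoef_norm -!ecoefM.
have -> : ecoef `|a| j * K ^+ j * (ecoef `|b| k * K ^+ k) * hn f =
          ecoef `|a| j * ecoef `|b| k * (K ^+ (j + k) * hn f) by rewrite exprD; ring.
by rewrite ler_wpM2l ?mulr_ge0 ?ecoef_ge0 ?(iter_bound K0 HK).
Qed.

Lemma exp_partial_defect a b f N :
  hn (S (a + b) N f - S a N (S b N f)) <=
  (series (exp_coeff (`|a| * K)) N * series (exp_coeff (`|b| * K)) N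
     - series (exp_coeff (`|a| * K + `|b| * K)) N) * hn f.
Proof.
set p := `|a| * K; set q := `|b| * K.
have tail : \sum_(j < N) \sum_(N - j <= k < N) ecoef p j * ecoef q k =
    series (exp_coeff p) N * series (exp_coeff q) N - series (exp_coeff (p + q)) N.
  rewrite -(square_minus_triangle (fun j k => ecoef p j * ecoef q k)) !series_ord.
  rewrite mulr_suml; congr (_ - _).
    by apply: eq_bigr => j _; rewrite mulr_sumr -ecoefE; apply: eq_bigr => k _; rewrite -ecoefE.
  by apply: eq_bigr => n _; rewrite -ecoefE ecoef_binom.
rewrite -(hnormB Hip) exp_partial_comp exp_partial_add square_minus_triangle.
rewrite -tail mulr_suml; apply: le_trans (hnorm_sum Hip _ _) _; apply: ler_sum => j _.
rewrite mulr_suml; apply: le_trans (hnorm_sum Hip _ _) _; apply: ler_sum => k _.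
exact: double_term_bound.
Qed.

Lemma exp_semigroup a b f : E (a + b) f = E a (E b f).
Proof.
set p := `|a| * K; set q := `|b| * K.
apply: (hcvg_unique Hip (exp_partial_cvg HE (a + b) f)).
apply: (hcvg_dominated (a := fun N =>
   (series (exp_coeff p) N * series (exp_coeff q) N - series (exp_coeff (p + q)) N) * hn f
   + expR p * hn (S b N f - E b f) + hn (S a N (E b f) - E a (E b f)))).
  move=> N; apply: le_trans (hnorm_tri Hip _ (S a N (S b N f)) _) _.
  rewrite -addrA lerD ?exp_partial_defect //.
  apply: le_trans (hnorm_tri Hip _ (S a N (E b f)) _) _; rewrite lerD //.
  rewrite -(linB (exp_partial_linear Alin _ _)); exact: (exp_partial_le_exp Hip K0 HK).
have h1 := @cvgMr_tmp _ _ _ _ _ _ (hn f) (exp_cauchy_defect_cvg p q).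
have h2 := @cvgMl_tmp _ _ _ _ _ (expR p) _ (iffLR (hcvgP _ _ _) (exp_partial_cvg HE b f)).
have h3 := iffLR (hcvgP _ _ _) (exp_partial_cvg HE a (E b f)).
have := cvgD (cvgD (h1 _) (h2 _)) h3; rewrite mul0r mulr0 !addr0.
move=> h. exact: h.
Qed.

End Semigroup.

Lemma lipschitz_continuous_at (R : realType) (f : R -> R) t0 (M : R) :
  (forall t, `|t - t0| <= 1 -> `|f t - f t0| <= M * `|t - t0|) -> {for t0, continuous f}.
Proof.
move=> h; apply/cvgrPdist_lt => e e0.
have M1 : 0 < `|M| + 1 by rewrite ltr_pwDr.
exists (Num.min 1 (e / (`|M| + 1))); first by rewrite /= lt_min ltr01 divr_gt0.
move=> t /=; rewrite lt_min => /andP[h1 h2]; rewrite distrC.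
apply: le_lt_trans (h t _) _; first by rewrite distrC ltW.
move: h2; rewrite distrC ltr_pdivlMr // mulrC => h2; apply: le_lt_trans h2.
rewrite mulrDl mul1r (le_trans (ler_wpM2r (normr_ge0 _) (ler_norm M))) //.
by rewrite lerDl normr_ge0.
Qed.

Lemma expR_sub1_le (R : realType) (x c : R) : 0 <= x -> x <= c -> expR x - 1 <= x * expR c.
Proof.
move=> x0 xc; have h := expR_ge1Dx (- x).
have e1 : expR x * expR (- x) = 1 by rewrite -expRD subrr expR0.
have hx : 0 < expR x := expR_gt0 x.
have : expR x * (1 + - x) <= expR x * expR (- x) by rewrite ler_wpM2l // ltW.
rewrite e1 => h2; apply: (@le_trans _ _ (x * expR x)); first by nra.
by rewrite ler_wpM2l // ler_expR.
Qed.

Section Continuity.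
Variables (R : realType) (V : lmodType R[i]) (ip : V -> V -> R[i]).
Hypothesis Hip : is_inner_product ip.
Local Notation hn := (hnorm ip).
Variables (A : V -> V) (K : R).
Hypothesis Alin : linear A.
Hypothesis K0 : 0 <= K.
Hypothesis HK : forall x, hn (A x) <= K * hn x.
Variable E : R -> V -> V.
Hypothesis HE : is_operator_exp ip A E.

Lemma exp_increment_bound t t0 g :
  hn (E t g - E t0 g) <= expR (`|t0| * K) * ((expR (`|t - t0| * K) - 1) * hn g).
Proof.
have -> : E t g = E t0 (E (t - t0) g).
  by rewrite -(exp_semigroup Hip Alin K0 HK HE) addrC subrK.
rewrite -(linB (exp_linear Hip Alin HE t0)).
apply: le_trans (exp_bound Hip K0 HK HE _ _) _.
by rewrite ler_wpM2l ?expR_ge0 // (exp_sub_id Hip K0 HK HE).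
Qed.

Lemma ip_exp_lipschitz f g t0 t : `|t - t0| <= 1 ->
  cmod (ip f (E t g) - ip f (E t0 g)) <=
  (hn f * expR (`|t0| * K) * hn g * (K * expR K)) * `|t - t0|.
Proof.
move=> h1; rewrite -(ipBr Hip); apply: le_trans (cmod_ip_le Hip _ _) _.
have hx : expR (`|t - t0| * K) - 1 <= `|t - t0| * K * expR K.
  by rewrite expR_sub1_le ?mulr_ge0 // -{2}[K]mul1r ler_wpM2r.
have hf := hnorm_ge0 ip f; have hg := hnorm_ge0 ip g; have he := expR_ge0 (`|t0| * K).
apply: le_trans (ler_wpM2l hf (exp_increment_bound t t0 g)) _.
apply: le_trans (ler_wpM2l hf (ler_wpM2l he (ler_wpM2r hg hx))) _.
by rewrite le_eqVlt; apply/orP; left; apply/eqP; ring.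
Qed.

Lemma ip_exp_continuous f g : continuous (fun t => cabs2 (ip f (E t g))).
Proof.
move=> t0; set M := hn f * expR (`|t0| * K) * hn g * (K * expR K).
have hRe : {for t0, continuous (fun t => complex.Re (ip f (E t g)))}.
  apply: (lipschitz_continuous_at (M := M)) => t /(ip_exp_lipschitz f g).
  apply: le_trans; apply: le_trans (cmod_ge_Re _).
  by case: (ip f (E t g)) => ? ?; case: (ip f (E t0 g)).
have hIm : {for t0, continuous (fun t => complex.Im (ip f (E t g)))}.
  apply: (lipschitz_continuous_at (M := M)) => t /(ip_exp_lipschitz f g).
  apply: le_trans; apply: le_trans (cmod_ge_Im _).
  by case: (ip f (E t g)) => ? ?; case: (ip f (E t0 g)).
have := continuousD (continuousM hRe hRe) (continuousM hIm hIm).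
by congr {for _, continuous _}; apply: funext => t; rewrite /cabs2 /= !expr2.
Qed.

End Continuity.

(* Riesz representation of a bounded linear functional phi on a Hilbert space,
   obtained from the vector of least norm on the affine hyperplane {phi = 1}. *)
Section Riesz.
Variables (R : realType) (V : lmodType R[i]) (ip : V -> V -> R[i]).
Hypothesis Hip : is_inner_product ip.
Hypothesis Hcomp : hcomplete ip.
Local Notation hn := (hnorm ip).
Local Notation hsq := (hsq ip).
Variables (phi : V -> R[i]^o) (B : R).
Hypothesis philin : linear phi.
Hypothesis phib : forall x, cmod (phi x) <= B * hn x.

Lemma parallelogram x y : hsq (x - y) + hsq (x + y) = 2 * hsq x + 2 * hsq y.
Proof.
have hsqN z : hsq (- z) = hsq z by rewrite -!(hnorm_sqr Hip) (hnormN Hip).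
by rewrite !(hsqD Hip) hsqN (ipNr Hip); case: (ip x y) => a b /=; ring.
Qed.

Definition hyperplane_dist : R := inf [set hn h | h in [set h | phi h = 1]].
Local Notation d := hyperplane_dist.

Section Minimizer.
Variable z0 : V.
Hypothesis phi_z0 : phi z0 = 1.

Lemma hyperplane_has_inf : has_inf [set hn h | h in [set h | phi h = 1]].
Proof. by split; [exists (hn z0), z0|exists 0 => _ [y _ <-]; exact: hnorm_ge0]. Qed.

Lemma hyperplane_dist_ge0 : 0 <= d.
Proof. by apply: lb_le_inf; [exists (hn z0), z0|move=> _ [h _ <-]; exact: hnorm_ge0]. Qed.

Lemma hyperplane_dist_le h : phi h = 1 -> d <= hn h.
Proof.
by move=> ph; apply: (ge_inf hyperplane_has_inf.2); exists h.
Qed.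

Lemma hyperplane_dist_approx e : 0 < e -> exists h, phi h = 1 /\ hn h < d + e.
Proof.
move=> e0; have [_ [h ph <-] hl] := inf_adherent e0 hyperplane_has_inf.
by exists h.
Qed.

(* a minimising sequence is Cauchy, by the parallelogram law *)
Lemma minimizing_cauchy (hs : nat -> V) :
  (forall n, phi (hs n) = 1) -> (forall n, hn (hs n) < d + (n.+1%:R)^-1) ->
  hcauchy ip hs.
Proof.
move=> phs hl; set c := 2 * d + 1.
have d0 := hyperplane_dist_ge0; have c0 : 0 < c by rewrite ltr_pwDr // mulr_ge0.
have near_d n : hsq (hs n) <= d ^+ 2 + c * (n.+1%:R)^-1.
  set w := (n.+1%:R : R)^-1.
  have e0 : 0 < w by rewrite invr_gt0 ltr0Sn.
  have e1 : w <= 1 by rewrite invf_le1 ?ltr0Sn // ler1n.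
  have : hsq (hs n) <= (d + w) ^+ 2.
    rewrite -(hnorm_sqr Hip); apply: lerXn2r; rewrite ?nnegrE ?hnorm_ge0 ?addr_ge0 //.
    - exact: ltW.
    - exact: ltW (hl n).
  rewrite sqrrD /c; nra.
have mid m n : 4 * d ^+ 2 <= hsq (hs m + hs n).
  have ph : phi ((2^-1)%:C *: (hs m + hs n)) = 1.
    rewrite (linZ philin) (linD philin) !phs /GRing.scale /=.
    by apply/eqP; rewrite eq_complex /=; apply/andP; split; apply/eqP; field.
  have := hyperplane_dist_le ph; rewrite (hnormZ_real Hip) ger0_norm ?invr_ge0 ?ler0n //.
  move/(lerXn2r 2); rewrite ?nnegrE ?mulr_ge0 ?invr_ge0 ?hnorm_ge0 // => /(_ d0 isT).
  by rewrite exprMn (hnorm_sqr Hip) exprVn; nra.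
move=> e e0.
have e'0 : 0 < e ^+ 2 / (4 * c) by rewrite divr_gt0 ?exprn_gt0 ?mulr_gt0.
have [N _ HN] := near_infty_natSinv_lt (PosNum e'0).
exists N => m n /HN /= hm /HN /= hn.
rewrite -(ltr_pXn2r (n := 2)) ?nnegrE ?hnorm_ge0 ?ltW // (hnorm_sqr Hip).
have := parallelogram (hs m) (hs n); have := mid m n.
have := near_d m; have := near_d n; move: hm hn; rewrite !ltr_pdivlMr ?mulr_gt0 //.
set a := (m.+1%:R : R)^-1; set b := (n.+1%:R : R)^-1; nra.
Qed.

Lemma hyperplane_minimizer :
  exists h0, phi h0 = 1 /\ forall h, phi h = 1 -> hn h0 <= hn h.
Proof.
have approx n : exists h, phi h = 1 /\ hn h < d + (n.+1%:R)^-1.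
  by apply: hyperplane_dist_approx; rewrite invr_gt0 ltr0Sn.
have [hs /all_and2[phs hl]] := choice approx.
have [h0 /(hcvgP) lim_h0] := Hcomp (minimizing_cauchy phs hl).
have ph0 : phi h0 = 1.
  apply/eqP; rewrite -subr_eq0; apply/eqP/cmod_eq0/eqP.
  rewrite eq_le cmod_ge0 andbT -(mulr0 B); apply: (cvg_lbound (cvgMl_tmp lim_h0)).
  apply: nearW => n; rewrite -(phs n) -(linB philin) (hnormB Hip); exact: phib.
exists h0; split => // h ph; apply: le_trans (hyperplane_dist_le ph).
apply/ler_addgt0Pr => e e0; apply: (hcvg_norm_le Hip (iffRL (hcvgP _ _ _) lim_h0)).
have [N _ HN] := near_infty_natSinv_lt (PosNum e0).
by exists N => // n /HN /= hn; rewrite ltW // (lt_le_trans (hl n)) // lerD2l ltW.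
Qed.

End Minimizer.

Lemma minimizer_orthogonal h0 : phi h0 = 1 -> (forall h, phi h = 1 -> hn h0 <= hn h) ->
  forall k, phi k = 0 -> ip h0 k = 0.
Proof.
move=> ph0 hmin k pk; set z := ip h0 k; set t := (hsq k + 1)^-1.
have hk := hsq_ge0 Hip k.
have t0 : 0 < t by rewrite invr_gt0 ltr_pwDr.
have tk : t * hsq k < 1 by rewrite ltr_pdivrMl ?mulr1 ?ltr_pwDr // ltrDl.
have := hmin (h0 - (t%:C * z) *: k).
rewrite (linB philin) (linZ philin) pk /GRing.scale /= mulr0 subr0 => /(_ ph0).
rewrite -(ler_pXn2r (n := 2)) ?nnegrE ?hnorm_ge0 // !(hnorm_sqr Hip) (hsqB_scale Hip) -/z.
have -> : complex.Re (conjc (t%:C * z) * z) = t * cabs2 z.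
  by rewrite /cabs2; case: z => p q /=; rewrite !mul0r !subr0 !addr0; ring.
have -> : cabs2 (t%:C * z) = t ^+ 2 * cabs2 z.
  by rewrite /cabs2; case: z => p q /=; rewrite !mul0r !subr0 !addr0; ring.
move=> h; apply: cabs2_eq0; apply/eqP; rewrite eq_le cabs2_ge0 andbT.
have c0 := cabs2_ge0 z; rewrite leNgt; apply/negP => cp.
have : 0 < t * cabs2 z * (2 - t * hsq k) by rewrite !mulr_gt0 // subr_gt0 (lt_trans tk) ?ltr1n.
nra.
Qed.

Lemma riesz : exists u, forall h, phi h = ip h u.
Proof.
have [[x0 hx0]|phi0] := pselect (exists x0, phi x0 <> 0); last first.
  exists 0 => h; rewrite (ip0r Hip).
  by apply: contrapT => hh; apply: phi0; exists h.
have ph_z0 : phi ((phi x0)^-1 *: x0) = 1.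
  by rewrite (linZ philin) /GRing.scale /= mulVf //; apply/eqP.
have [h0 [ph0 hmin]] := hyperplane_minimizer ph_z0.
have h0n0 : hsq h0 != 0.
  apply/eqP => /(hsq_eq0 Hip) e; move: ph0; rewrite e (lin0 philin) => /eqP.
  by rewrite eq_sym oner_eq0.
exists (((hsq h0)^-1)%:C *: h0) => h.
have pk : phi (h - phi h *: h0) = 0.
  by rewrite (linB philin) (linZ philin) ph0 /GRing.scale /= mulr1 subrr.
have /eqP := minimizer_orthogonal ph0 hmin pk.
rewrite (ipBr Hip) (ipZr Hip) (ip_self Hip) subr_eq0 => /eqP e.
rewrite (ipZr Hip) conjc_real (ipC Hip) e rmorphM /= conjcK oppr0.
by rewrite mulrCA -rmorphM mulVf // mulr1.
Qed.

End Riesz.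

Lemma integral_itv_shift (R : realType) (G : R -> R) (s L : R) : 0 <= L -> continuous G ->
  (\int[lebesgue_measure]_(x in `[s, (s + L)%R]) (G x)%:E =
   \int[lebesgue_measure]_(x in `[0%R, L]) (G (x + s)%R)%:E)%E.
Proof.
move=> L0 cG; pose F := fun x : R => x + s.
have FE : F = (id + cst s)%R by apply: funext.
have dF : F^`() = cst 1.
  apply: funext => x; rewrite derive1E FE deriveD; last 2 first.
  - exact: derivable_id.
  - exact: derivable_cst.
  by rewrite derive_id derive_cst addr0.
have cF : continuous F by move=> x; rewrite FE; apply: continuousD => //; exact: cst_continuous.
have := @integration_by_substitution_increasing R F G 0 L L0.
rewrite dF /F add0r [L + s]addrC => ->.
- by apply: eq_integral => x _; rewrite /= mulr1.
- by move=> x y _ _ xy; rewrite ltrD2r.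
- by move=> x _; exact: cst_continuous.
- exact: is_cvg_cst.
- exact: is_cvg_cst.
- split.
  + by move=> x _; rewrite -/F FE; apply: derivableD; [exact: derivable_id|exact: derivable_cst].
  + exact: cvg_at_right_filter (cF 0).
  + exact: cvg_at_left_filter (cF L).
- exact: continuous_subspaceT.
Qed.

Section DatkoSummation.
Variable R : realType.
Local Notation mu := (@lebesgue_measure R).
Variables (T : choiceType) (G : set T) (Phi : T -> T -> R -> R).
Variables (adj : R -> T -> T) (nf : T -> R) (c C L : R).
Hypothesis L0 : 0 < L.
Hypothesis Phi_ge0 : forall f g t, 0 <= Phi f g t.
Hypothesis Phi_cont : forall f g, continuous (Phi f g).
Hypothesis Phi_shift : forall s f g t, Phi (adj s f) g t = Phi f g (t + s).
Hypothesis frame_lower : forall f,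
  ((c * nf f)%:E <= \esum_(g in G) \int[mu]_(t in `[0%R, L]) (Phi f g t)%:E)%E.
Hypothesis integral_upper : forall f,
  (\esum_(g in G) \int[mu]_(t in `[0%R, +oo[) (Phi f g t)%:E <= (C * nf f)%:E)%E.

Lemma coef_measurable f g (D : set R) : measurable_fun D (fun t => (Phi f g t)%:E).
Proof.
apply: measurable_funS (_ : measurable_fun setT (EFin \o Phi f g)) => //.
by apply/measurable_EFinP; exact: continuous_measurable_fun.
Qed.

(* the k-th block [kL, (k+1)L[ of the integral controls nf (adj (k L) f) *)
Lemma frame_sum_le_integral n f :
  ((\sum_(k < n) c * nf (adj (k%:R * L) f))%:E <=
   \esum_(g in G) \int[mu]_(t in `[0%R, (n%:R * L)%R[) (Phi f g t)%:E)%E.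
Proof.
elim: n => [|n IH].
  by rewrite big_ord0 esum_ge0 // => g _; apply: integral_ge0 => t _; rewrite lee_fin.
have blocks : `[0%R, (n.+1%:R * L)%R[ =
    `[0%R, (n%:R * L)%R[ `|` `[(n%:R * L)%R, (n.+1%:R * L)%R[ :> set R.
  apply: itv_bndbnd_setU; rewrite bnd_simp.
    by rewrite mulr_ge0 // ltW.
  by rewrite ler_wpM2r ?ler_nat // ltW.
have int_ge0 a b g : (0 <= \int[mu]_(t in `[a, b[) (Phi f g t)%:E)%E.
  by apply: integral_ge0 => t _; rewrite lee_fin.
rewrite big_ord_recr /= EFinD.
have -> : (\esum_(g in G) \int[mu]_(t in `[0%R, (n.+1%:R * L)%R[) (Phi f g t)%:E =
  \esum_(g in G) \int[mu]_(t in `[0%R, (n%:R * L)%R[) (Phi f g t)%:E +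
  \esum_(g in G) \int[mu]_(t in `[(n%:R * L)%R, (n.+1%:R * L)%R[) (Phi f g t)%:E)%E.
  rewrite -esumD; [|by move=> g _; exact: int_ge0|by move=> g _; exact: int_ge0].
  apply: eq_esum => g _; rewrite blocks ge0_integral_setU //.
  - exact: coef_measurable.
  - by move=> t _; rewrite lee_fin.
  - apply/disj_setPS => t [] /=; rewrite !in_itv /= => /andP[_ h1] /andP[h2 _].
    by move: (lt_le_trans h1 h2); rewrite ltxx.
apply: leeD => //; apply: le_trans (frame_lower _) _; apply: le_esum => g _.
under eq_integral => t _ do rewrite Phi_shift.
rewrite -integral_itv_shift //; last exact: ltW.
rewrite -integral_itv_bndo_bndc; last exact: coef_measurable.
by rewrite -[n.+1%:R * L]/((n.+1)%:R * L)%R mulrSr mulrDl mul1r.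
Qed.

Lemma frame_sum_bound n f : \sum_(k < n) c * nf (adj (k%:R * L) f) <= C * nf f.
Proof.
rewrite -lee_fin; apply: le_trans (frame_sum_le_integral n f) _.
apply: le_trans (integral_upper f); apply: le_esum => g _.
apply: ge0_subset_integral => //; first exact: coef_measurable.
- by move=> t _; rewrite lee_fin.
- by move=> t /=; rewrite !in_itv /= => /andP[-> _].
Qed.

End DatkoSummation.

(* If the orbit {adj (k L) f} of a semigroup-like
   family is square-summable with sum_k c nf (adj (k L) f) <= C nf f, then
   every term is <= (C/c) nf f, so n nf (adj (n L) f) <= (C/c)^2 nf f,
   and adj (N L) shrinks nf by a factor 4 once N > 4 (C/c)^2. *)
Section OrbitDecay.
Variables (R : realType) (T : Type) (adj : R -> T -> T) (nf : T -> R) (L c C : R).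
Hypothesis c0 : 0 < c.
Hypothesis nf_ge0 : forall f, 0 <= nf f.
Hypothesis orbit_sum : forall n f, \sum_(k < n) c * nf (adj (k%:R * L) f) <= C * nf f.
Hypothesis adj_comp : forall n k f, (k <= n)%N ->
  adj (n%:R * L) f = adj ((n - k)%N%:R * L) (adj (k%:R * L) f).

Let M := `|C / c|.

Lemma orbit_sum_le n f : \sum_(k < n) nf (adj (k%:R * L) f) <= M * nf f.
Proof.
apply: (@le_trans _ _ (C / c * nf f)); last by rewrite ler_wpM2r ?ler_norm.
by rewrite mulrAC ler_pdivlMr // mulrC mulr_sumr orbit_sum.
Qed.

Lemma orbit_term_le k f : nf (adj (k%:R * L) f) <= M * nf f.
Proof.
have := orbit_sum_le k.+1 f; rewrite big_ord_recr /=; apply: le_trans.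
by rewrite lerDr sumr_ge0.
Qed.

Lemma orbit_linear_decay n f : n%:R * nf (adj (n%:R * L) f) <= M ^+ 2 * nf f.
Proof.
have : \sum_(k < n) nf (adj (n%:R * L) f) <= \sum_(k < n) M * nf (adj (k%:R * L) f).
  by apply: ler_sum => k _; rewrite (adj_comp f (ltnW (ltn_ord k))) orbit_term_le.
rewrite sumr_const card_ord -mulr_sumr => h; rewrite mulr_natl; apply: le_trans h _.
by rewrite expr2 -mulrA ler_wpM2l ?normr_ge0 ?orbit_sum_le.
Qed.

Lemma orbit_quarter : exists N : nat, (0 < N)%N /\ forall f, nf (adj (N%:R * L) f) <= nf f / 4.
Proof.
set N := (Num.Def.archi_bound (4 * M ^+ 2)).+1.
have hN : 4 * M ^+ 2 < N%:R.
  by rewrite (lt_le_trans (archi_boundP _)) ?ler_nat // mulr_ge0 ?sqr_ge0.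
exists N; split => // f; have := orbit_linear_decay N f.
have := nf_ge0 f; have := nf_ge0 (adj (N%:R * L) f); have Np : 0 < N%:R :> R by [].
set x := nf (adj _ f); set y := nf f; set m := M ^+ 2 => x0 y0 h.
have : (4 * m) * y <= N%:R * y by rewrite ler_wpM2r // ltW.
by rewrite ler_pdivlMr //; nra.
Qed.

End OrbitDecay.

Lemma adjoint_bound (R : realType) (V : lmodType R[i]) (ip : V -> V -> R[i])
    (Hip : is_inner_product ip) (S Sa : V -> V) (q : R) :
  (forall f h, ip (Sa f) h = ip f (S h)) -> 0 <= q ->
  (forall y, hnorm ip (Sa y) <= q * hnorm ip y) -> forall x, hnorm ip (S x) <= q * hnorm ip x.
Proof.
move=> Hadj q0 hq x; set y := S x.
have hy := hnorm_ge0 ip y; have hx := hnorm_ge0 ip x.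
have h1 : hnorm ip y ^+ 2 <= q * hnorm ip y * hnorm ip x.
  rewrite (hnorm_sqr Hip) /hsq {2}/y -Hadj.
  by apply: le_trans (Re_ip_le Hip _ _) _; rewrite ler_wpM2r.
have [y0|yp] := eqVneq (hnorm ip y) 0; first by rewrite y0 mulr_ge0.
have ypos : 0 < hnorm ip y by rewrite lt_def yp.
by rewrite -(ler_pM2l ypos) -expr2 mulrCA mulrA.
Qed.

Lemma half_pow_le (R : realType) (t T : R) (m : nat) : 0 < T -> t / T < m.+1%:R ->
  (2^-1) ^+ m <= 2 * expR (- ln 2 / T * t).
Proof.
move=> T0 hm; have l2 : 0 < ln (2 : R) by rewrite ln_gt0 // ltr1n.
have e2 : expR (- ln (2:R)) = 2^-1 by rewrite expRN lnK // posrE ltr0n.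
have h1 : - ln 2 * (m.+1)%:R <= - ln 2 / T * t.
  have -> : - ln 2 / T * t = - (ln 2 * (t / T)) by ring.
  by rewrite mulNr lerN2 ler_wpM2l ?ltW.
have := h1; rewrite -ler_expR expRM_natr e2 exprS => h2.
have : 2 * (2^-1 * (2^-1) ^+ m) <= 2 * expR (- ln 2 / T * t) by rewrite ler_pM2l.
by rewrite mulrA divff ?mul1r // pnatr_eq0.
Qed.

Section Stability.
Variables (R : realType) (V : lmodType R[i]) (ip : V -> V -> R[i]).
Hypothesis Hip : is_inner_product ip.
Local Notation hn := (hnorm ip).
Variables (A : V -> V) (K : R).
Hypothesis Alin : linear A.
Hypothesis K0 : 0 <= K.
Hypothesis HK : forall x, hn (A x) <= K * hn x.
Variable E : R -> V -> V.
Hypothesis HE : is_operator_exp ip A E.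

Lemma exp_adjoint : hcomplete ip ->
  exists adj : R -> V -> V, forall s f h, ip (adj s f) h = ip f (E s h).
Proof.
move=> Hcomp; suff adjex s f : exists u, forall h, ip u h = ip f (E s h).
  by exists (fun s => projT1 (choice (adjex s))) => s; exact: projT2 (choice (adjex s)).
have lin : linear (fun x => ip (E s x) f : R[i]^o).
  by move=> a x y; rewrite (exp_linear Hip Alin HE) (ip_linl Hip).
have bnd x : cmod (ip (E s x) f) <= (expR (`|s| * K) * hn f) * hn x.
  rewrite mulrAC (le_trans (cmod_ip_le Hip _ _)) // ler_wpM2r ?hnorm_ge0 //.
  exact: (exp_bound Hip K0 HK HE).
have [u hu] := riesz Hip Hcomp lin bnd.
by exists u => h; rewrite (ipC Hip h u) -hu -(ipC Hip).
Qed.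

Lemma exp_iterated_contraction (T : R) : (forall x, hn (E T x) <= 2^-1 * hn x) ->
  forall m x, hn (E (m%:R * T) x) <= (2^-1) ^+ m * hn x.
Proof.
move=> hT; elim=> [|m IH] x.
  by rewrite mul0r expr0 mul1r (le_trans (exp_bound Hip K0 HK HE 0 x)) // normr0 mul0r expR0 mul1r.
rewrite exprS -mulrA -addn1 natrD mulrDl mul1r addrC (exp_semigroup Hip Alin K0 HK HE).
by rewrite (le_trans (hT _)) // ler_wpM2l ?invr_ge0 ?ler0n.
Qed.

Lemma exp_stable_of_contraction (T : R) : 0 < T ->
  (forall x, hn (E T x) <= 2^-1 * hn x) -> exponentially_stable ip E.
Proof.
move=> T0 hT; exists (2 * expR (T * K)), (- ln 2 / T); split.
- have := expR_ge1Dx (T * K); have : 0 <= T * K by rewrite mulr_ge0 // ltW.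
  lra.
- by rewrite mulNr oppr_lt0 divr_gt0 // ln_gt0 // ltr1n.
move=> t t0 x; have tT0 : 0 <= t / T by rewrite divr_ge0 // ltW.
set m := Num.Def.trunc (t / T); have /andP[hm1 hm2] := truncn_itv tT0.
rewrite -/m in hm1 hm2; set r := t - m%:R * T.
have r0 : 0 <= r by rewrite subr_ge0 -ler_pdivlMr.
have rT : r <= T.
  move: hm2; rewrite ltr_pdivrMr // -[m.+1]addn1 natrD mulrDl mul1r lerBlDr => /ltW.
  by rewrite addrC.
have hx := hnorm_ge0 ip x.
rewrite -{1}(subrK (m%:R * T) t) -/r (exp_semigroup Hip Alin K0 HK HE).
apply: le_trans (exp_bound Hip K0 HK HE r _) _.
apply: (@le_trans _ _ (expR (T * K) * ((2^-1) ^+ m * hn x))).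
  apply: ler_pM; rewrite ?expR_ge0 ?hnorm_ge0 //.
  - by rewrite ler_expR ger0_norm // ler_wpM2r.
  - exact: exp_iterated_contraction.
rewrite [2 * _]mulrC -!mulrA ler_wpM2l ?expR_ge0 // mulrA ler_wpM2r //.
by rewrite mulrA; exact: half_pow_le T0 hm2.
Qed.

End Stability.

Theorem mainTheorem4 (R : realType) (V : lmodType R[i]) (ip : V -> V -> R[i])
  (HH : complex_separable_hilbert ip)
  (A : V -> V) (HA : bounded_operator ip A)
  (E : R -> V -> V) (HE : is_operator_exp ip A E)
  (G : set V) (HGc : countable G) (HGb : bessel_system ip G)
  (C : R) (HC : 0 < C)
  (Hint : forall f : V,
     (\esum_(g in G) \int[lebesgue_measure]_(t in `[0%R, +oo[) (cabs2 (ip f (E t g)))%:E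
        <= (C * hnorm ip f ^+ 2)%:E)%E)
  (L : R) (HL : 0 < L)
  (Hframe : semi_continuous_frame ip E G `[0, L]) :
  exponentially_stable ip E.
Proof.
case: HH => Hip Hcomp _; case: HA => Alin [K1 HK1].
have K0 : 0 <= `|K1| := normr_ge0 K1.
have HK x : hnorm ip (A x) <= `|K1| * hnorm ip x.
  by rewrite (le_trans (HK1 x)) // ler_wpM2r ?hnorm_ge0 ?ler_norm.
have semigroup := exp_semigroup Hip Alin K0 HK HE.
have [adj Hadj] := exp_adjoint Hip Alin K0 HK HE Hcomp.
have adj_shift s f g t : cabs2 (ip (adj s f) (E t g)) = cabs2 (ip f (E (t + s) g)).
  by rewrite Hadj -semigroup addrC.
have adj_comp n k f : (k <= n)%N ->
    adj (n%:R * L) f = adj ((n - k)%N%:R * L) (adj (k%:R * L) f).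
  move=> kn; apply: (ip_inj Hip) => h; rewrite !Hadj -semigroup.
  by rewrite -mulrDl -natrD subnKC.
case: Hframe => c [C' [c0 _ Hfr]].
have orbit_sum := frame_sum_bound HL (fun f g t => cabs2_ge0 _)
   (fun f g => ip_exp_continuous Hip Alin K0 HK HE (f := f) (g := g)) adj_shift
   (fun f => (Hfr f).1) Hint.
have [N [N0 HN]] := orbit_quarter c0 (fun f => sqr_ge0 _) orbit_sum adj_comp.
apply: (exp_stable_of_contraction Hip Alin K0 HK HE (T := N%:R * L)).
  by rewrite mulr_gt0 // ltr0n.
apply: (adjoint_bound Hip (Hadj _)); first by rewrite invr_ge0 ler0n.
move=> y; rewrite -(ler_pXn2r (n := 2)) ?nnegrE ?mulr_ge0 ?invr_ge0 ?ler0n ?hnorm_ge0 //.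
by rewrite exprMn exprVn [_^-1 * _]mulrC -natrX; exact: HN.
Qed.
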